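(* Let $s$ and $i$ be MIAs over $I$ and $O$ such that $i$ is input-enabled. If $i\ \mathbf{mioco}\ s$, then for every IOLTS state $i'$ with $i'\sqsubseteq_{\mathrm{var}} i$ there exists some $s'\sqsubseteq_{\mathrm{var}} s$ such that $i'\ \mathbf{ioco}\ s'$.
   Context: IOLTS: $(P,I,O,\longrightarrow)$ with countable state set $P$, disjoint $I$ (inputs), $O$ (outputs), $\longrightarrow\subseteq P\times(I\cup O)\times P$. For an IOLTS: $init(p)=\{\mu\mid p\overset{\mu}{\longrightarrow}\}$; $p$ quiescent, $\delta(p)$, iff $init(p)\subseteq I$; $\delta$ acts as a self-loop at quiescent states; $p\ \mathrm{after}\ \sigma=\{q\mid p\overset{\sigma}{\longrightarrow}q\}$ for $\sigma\in(I\cup O\cup\{\delta\})^*$; $Out(P)=\{\mu\in O\mid\exists p\in P:p\overset{\mu}{\longrightarrow}\}\cup\{\delta\mid\exists p\in P:\delta(p)\}$; $Straces(p)=\{\sigma\mid p\overset{\sigma}{\longrightarrow}\}$; $i\ \mathbf{ioco}\ s$ iff for all $\sigma\in Straces(s)$, $Out(i\ \mathrm{after}\ \sigma)\subseteq Out(s\ \mathrm{after}\ \sigma)$. A MIA over $I,O$ is $(Q,I,O,\longrightarrow_\Box,\longrightarrow_\Diamond)$ with finite $Q$, must/may relations $\subseteq Q\times(I\cup O)\times Q$, every must transition a may transition, must input transitions deterministic, every may input transition a must transition. Input-enabled: every state has a must transition for every input. MIA-refinement $\mathcal R$: for $(p,q)\in\mathcal R$, every must transition $q\overset{a}{\longrightarrow}_\Box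 q'$ is matched by $p\overset{a}{\longrightarrow}_\Box p'$ with $(p',q')\in\mathcal R$, and every output may transition $p\overset{\alpha}{\longrightarrow}_\Diamond p'$ ($\alpha\in O$) is matched by $q\overset{\alpha}{\longrightarrow}_\Diamond q'$ with $(p',q')\in\mathcal R$; $p\sqsubseteq q$ iff such $\mathcal R$ contains $(p,q)$. Variant: for an IOLTS $(P,I,O,\longrightarrow)$ and a MIA $Q$, $p\sqsubseteq_{\mathrm{var}}q$ iff $(P,I,O,\longrightarrow,\longrightarrow)$ MIA-refines $Q$ via some $\mathcal R\ni(p,q)$ and $\longrightarrow\subseteq\longrightarrow_\Diamond$. Modal notions for $\gamma\in\{\Box,\Diamond\}$: $init_\gamma(p)=\{\mu\mid p\overset{\mu}{\longrightarrow}_\gamma\}$; $\delta_\Diamond(p)$ iff $init_\Box(p)\subseteq I$; $\delta_\Box(p)$ iff $init_\Diamond(p)\subseteq I$; $\delta_\gamma$ acts as a $\gamma$-self-loop at $\delta_\gamma$-states; $p\ \mathrm{after}_\gamma\ \sigma$, $Out_\gamma$, $Straces_\gamma$ defined as in the IOLTS case using $\gamma$-transitions and $\delta_\gamma$. $i\ \mathbf{mioco}\ s$ (for input-enabled $i$) iff (1) for all $\sigma\in Straces_\Diamond(s)$: $Out_\Diamond(i\ \mathrm{after}_\Diamond\ \sigma)\subseteq Out_\Diamond(s\ \mathrm{after}_\Diamond\ \sigma)$, and (2) for all $\sigma\in Straces_\Box(i)$: $Out_\Box(s\ \mathrm{after}_\Box\ \sigma)\subseteq Out_\Box(i\ \mathrm{after}_\Box\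 \sigma)$. *)

From mathcomp Require Import all_boot.
Set Implicit Arguments. Unset Strict Implicit. Unset Printing Implicit Defensive.

(* Action alphabet: inputs I and outputs O, disjoint by construction (sum type).
   Transition labels are elements of I + O (inl = input, inr = output). *)
Definition act (I O : Type) := (I + O)%type.

Inductive slab (I O : Type) : Type :=
| SIn of I
| SOut of O
| SDelta.
Arguments SIn {I O} _.
Arguments SOut {I O} _.
Arguments SDelta {I O}.

Record IOLTS (I O : Type) : Type := {
  ist :> countType;
  trans : ist -> act I O -> ist -> Prop
}.

Record MIA (I O : Type) : Type := {
  mst :> finType;
  must : mst -> act I O -> mst -> Prop;
  may  : mst -> act I O -> mst -> Prop;
  must_may : forall p a p', must p a p' -> may p a p';
  must_in_det : forall p (a : I) p1 p2,
      must p (inl a) p1 -> must p (inl a) p2 -> p1 = p2;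
  may_in_must : forall p (a : I) p', may p (inl a) p' -> must p (inl a) p'
}.

Section Generic.
Variables (I O : Type) (S : Type).

Definition quiet (t : S -> act I O -> S -> Prop) (p : S) : Prop :=
  forall a p', t p a p' -> exists x, a = inl x.

Definition sstep (t : S -> act I O -> S -> Prop) (qu : S -> Prop)
    (p : S) (l : slab I O) (p' : S) : Prop :=
  match l with
  | SIn x => t p (inl x) p'
  | SOut o => t p (inr o) p'
  | SDelta => qu p /\ p' = p
  end.

Fixpoint after (t : S -> act I O -> S -> Prop) (qu : S -> Prop)
    (p : S) (sigma : seq (slab I O)) (p' : S) : Prop :=
  match sigma with
  | [::] => p' = p
  | l :: sigma' => exists p1, sstep t qu p l p1 /\ after t qu p1 sigma' p'
  end.

Definition straces (t : S -> act I O -> S -> Prop) (qu : S -> Prop)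
    (p : S) (sigma : seq (slab I O)) : Prop :=
  exists p', after t qu p sigma p'.

Definition outs (t : S -> act I O -> S -> Prop) (qu : S -> Prop)
    (X : S -> Prop) (l : slab I O) : Prop :=
  match l with
  | SIn _ => False
  | SOut o => exists p p', X p /\ t p (inr o) p'
  | SDelta => exists p, X p /\ qu p
  end.
End Generic.

Definition tDia {I O : Type} (M : MIA I O) : M -> act I O -> M -> Prop := @may _ _ M.
Definition qDia {I O : Type} (M : MIA I O) : M -> Prop := quiet (@must _ _ M).
Definition tBox {I O : Type} (M : MIA I O) : M -> act I O -> M -> Prop := @must _ _ M.
Definition qBox {I O : Type} (M : MIA I O) : M -> Prop := quiet (@may _ _ M).

Arguments tDia {I O} M _ _ _.
Arguments qDia {I O} M _.
Arguments tBox {I O} M _ _ _.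
Arguments qBox {I O} M _.

Section Relations.
Variables I O : Type.

Definition ioco (Li Ls : IOLTS I O) (i : Li) (s : Ls) : Prop :=
  forall sigma, straces (@trans _ _ Ls) (quiet (@trans _ _ Ls)) s sigma ->
  forall l,
    outs (@trans _ _ Li) (quiet (@trans _ _ Li))
         (after (@trans _ _ Li) (quiet (@trans _ _ Li)) i sigma) l ->
    outs (@trans _ _ Ls) (quiet (@trans _ _ Ls))
         (after (@trans _ _ Ls) (quiet (@trans _ _ Ls)) s sigma) l.

Definition input_enabled (M : MIA I O) : Prop :=
  forall (p : M) (a : I), exists p', must p (inl a) p'.

Definition mioco (Mi Ms : MIA I O) (i : Mi) (s : Ms) : Prop :=
  (forall sigma, straces (tDia Ms) (qDia Ms) s sigma ->
     forall l, outs (tDia Mi) (qDia Mi) (after (tDia Mi) (qDia Mi) i sigma) l ->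
               outs (tDia Ms) (qDia Ms) (after (tDia Ms) (qDia Ms) s sigma) l)
  /\
  (forall sigma, straces (tBox Mi) (qBox Mi) i sigma ->
     forall l, outs (tBox Ms) (qBox Ms) (after (tBox Ms) (qBox Ms) s sigma) l ->
               outs (tBox Mi) (qBox Mi) (after (tBox Mi) (qBox Mi) i sigma) l).

(* p [=_var q: the IOLTS, viewed with must = may = -->, MIA-refines M via a
   relation R containing (p, q), and (w.r.t. R) --> is included in -->_may. *)
Definition refines_var (L : IOLTS I O) (M : MIA I O) (p : L) (q : M) : Prop :=
  exists R : L -> M -> Prop,
    R p q /\
    forall (p0 : L) (q0 : M), R p0 q0 ->
      (forall a q', must q0 a q' -> exists p', trans p0 a p' /\ R p' q') /\
      (forall (o : O) p', trans p0 (inr o) p' ->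
          exists q', may q0 (inr o) q' /\ R p' q') /\
      (forall a p', trans p0 a p' -> exists q', may q0 a q' /\ R p' q').
End Relations.

(* The witness s' is the MIA of s turned into an IOLTS whose states carry a
   mode: in mode [true] a state offers all its may-transitions, in mode
   [false] only its must-transitions, and every step may switch mode.  This
   IOLTS refines s, and its Diamond-quiescent states in mode [false] are
   quiescent.  A suspension trace of i' followed by an output of i' is
   simulated in i, so by the Diamond half of mioco the same output is allowed
   in s; it is reproduced in s' by running the trace with mode [false] before
   each delta and mode [true] before each output.  Such a schedule exists
   because in i' no output directly follows a delta; only the initial mode
   must be guessed in advance, from whether i' is quiescent. *)

From Stdlib Require Import Classical.
From mathcomp Require Import all_boot.

Set Implicit Arguments. Unset Strict Implicit. Unset Printing Implicit Defensive.

Section Outputs.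
Variables (I O S : Type) (t : S -> act I O -> S -> Prop) (qu : S -> Prop).

Lemma outs_mono (X Y : S -> Prop) l :
  (forall y, X y -> Y y) -> outs t qu X l -> outs t qu Y l.
Proof.
move=> XY; case: l => //= [o [p [p' [Xp tp]]]|[p [Xp qp]]].
  by exists p, p'; split => //; apply: XY.
by exists p; split => //; apply: XY.
Qed.

Lemma outs_witness (X : S -> Prop) l :
  outs t qu X l -> exists2 p, X p & outs t qu (fun y => y = p) l.
Proof.
case: l => //= [o [p [p' [Xp tp]]]|[p [Xp qp]]].
  by exists p => //; exists p, p'.
by exists p => //; exists p.
Qed.

Lemma outs_after_cons p x p1 sigma l :
  sstep t qu p x p1 -> outs t qu (after t qu p1 sigma) l ->
  outs t qu (after t qu p (x :: sigma)) l.
Proof. by move=> step; apply: outs_mono => y p1y; exists p1. Qed.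

End Outputs.

Lemma exists_mode (P : Prop) : exists b : bool, b = true <-> ~ P.
Proof. by case: (classic P) => HP; [exists false | exists true]. Qed.

Section Simulation.
Variables (I O : Type) (L : IOLTS I O) (M : MIA I O) (R : L -> M -> Prop).

Definition var_simulation : Prop :=
  forall (p0 : L) (q0 : M), R p0 q0 ->
    (forall a q', must q0 a q' -> exists p', trans p0 a p' /\ R p' q') /\
    (forall (o : O) p', trans p0 (inr o) p' ->
        exists q', may q0 (inr o) q' /\ R p' q') /\
    (forall a p', trans p0 a p' -> exists q', may q0 a q' /\ R p' q').

Hypothesis simR : var_simulation.

Local Notation tL := (@trans _ _ L).
Local Notation qL := (quiet (@trans _ _ L)).

Lemma var_simulation_quiet p q : R p q -> qL p -> qDia M q.
Proof.
move=> Rpq qp a q' mq; have [p' [tp _]] := (simR Rpq).1 _ _ mq.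
exact: qp tp.
Qed.

Lemma var_simulation_after sigma : forall (p : L) (q : M) p',
  R p q -> after tL qL p sigma p' ->
  exists2 q', after (tDia M) (qDia M) q sigma q' & R p' q'.
Proof.
elim: sigma => [|x sigma IH] p q p' Rpq /=; first by move=> ->; exists q.
move=> [p1 [step run]].
have [_ [_ may_of_trans]] := simR Rpq.
case: x step => [a|o|] /= step.
- have [q1 [mq Rpq1]] := may_of_trans _ _ step.
  have [q' run' Rq'] := IH _ _ _ Rpq1 run.
  by exists q' => //; exists q1.
- have [q1 [mq Rpq1]] := may_of_trans _ _ step.
  have [q' run' Rq'] := IH _ _ _ Rpq1 run.
  by exists q' => //; exists q1.
- case: step => qp ?; subst p1.
  have [q' run' Rq'] := IH _ _ _ Rpq run.
  exists q' => //; exists q; do !split => //.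
  exact: var_simulation_quiet Rpq qp.
Qed.

Lemma var_simulation_outs p q l :
  R p q -> outs tL qL (fun y => y = p) l ->
  outs (tDia M) (qDia M) (fun y => y = q) l.
Proof.
move=> Rpq; case: l => //= [o [_ [p' [-> tp]]]|[_ [-> qp]]].
  by have [q' [mq _]] := (simR Rpq).2.1 _ _ tp; exists q, q'.
by exists q; split => //; apply: var_simulation_quiet Rpq qp.
Qed.

End Simulation.

Section Schedules.
Variables (I O : Type) (L : IOLTS I O).

Local Notation tL := (@trans _ _ L).
Local Notation qL := (quiet (@trans _ _ L)).

(* Modes can be chosen along [w], starting with [b], so that every delta is
   taken in mode [false] and every output in mode [true]; the last label of
   [w] is the observed output, not a step. *)
Fixpoint mode_trace (b : bool) (w : seq (slab I O)) : Prop :=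
  match w with
  | [::] => True
  | SIn _ :: w' => exists b', mode_trace b' w'
  | SOut _ :: w' => b /\ exists b', mode_trace b' w'
  | SDelta :: w' => ~~ b /\ mode_trace false w'
  end.

Lemma mode_trace_of_lts sigma : forall (x p : L) l b,
  (b = true <-> ~ qL x) -> after tL qL x sigma p ->
  outs tL qL (fun y => y = p) l -> mode_trace b (rcons sigma l).
Proof.
have active x a y b : (b = true <-> ~ qL x) -> tL x (inr a) y -> b.
  by move=> [_ mode] tx; apply: mode => /(_ _ _ tx) [].
have passive x b : (b = true <-> ~ qL x) -> qL x -> ~~ b.
  by case: b => // [[/(_ erefl)]].
elim: sigma => [|y sigma IH] x p l b mode /=.
  move=> ->; case: l => //= [o [_ [p' [-> tx]]]|[_ [-> qx]]].
    by split; [exact: active mode tx | exists b].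
  by split => //; exact: passive mode qx.
move=> [x1 [step run]] outp.
have [b1 mode1] := exists_mode (qL x1).
case: y step => [a|o|] /= step.
- by exists b1; exact: IH mode1 run outp.
- by split; [exact: active mode step | exists b1; exact: IH mode1 run outp].
- case: step => qx ?; subst x1; split; first exact: passive mode qx.
  by apply: IH run outp; split => // /(_ qx).
Qed.

End Schedules.

Section ModeLTS.
Variables (I O : Type) (M : MIA I O).

Definition mode_lts : IOLTS I O :=
  {| ist := (M * bool)%type;
     trans := fun (x : M * bool) a (y : M * bool) =>
        if x.2 then may x.1 a y.1 else must x.1 a y.1 |}.

Local Notation tM := (@trans _ _ mode_lts).
Local Notation qM := (quiet (@trans _ _ mode_lts)).

Lemma mode_lts_may (x y : mode_lts) a : tM x a y -> may x.1 a y.1.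
Proof. by rewrite /=; case: x.2 => // /must_may. Qed.

Lemma mode_lts_var_simulation :
  var_simulation (fun (x : mode_lts) (q : M) => x.1 = q).
Proof.
move=> x _ <-; split; last split.
- move=> a q' mq; exists (q', x.2); split => //=.
  by case: x.2 => //; apply: must_may.
- by move=> o y /mode_lts_may ?; exists y.1.
- by move=> a y /mode_lts_may ?; exists y.1.
Qed.

Lemma refines_var_mode (x : mode_lts) : refines_var x x.1.
Proof.
by exists (fun (y : mode_lts) (q : M) => y.1 = q); split; last exact: mode_lts_var_simulation.
Qed.

Lemma mode_lts_quiet (q : M) : qDia M q -> qM ((q, false) : mode_lts).
Proof. by move=> qq a y; apply: qq. Qed.

Lemma mode_lts_outs sigma l : forall (q0 q : M) b0,
  after (tDia M) (qDia M) q0 sigma q ->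
  outs (tDia M) (qDia M) (fun y => y = q) l ->
  mode_trace b0 (rcons sigma l) ->
  outs tM qM (after tM qM ((q0, b0) : mode_lts) sigma) l.
Proof.
elim: sigma => [|x sigma IH] q0 q b0 /=.
  move=> ->; case: l => //= [o [_ [q' [-> mq]]] [-> _]|[_ [-> qq]] [/negbTE -> _]].
    by exists (q0, true), (q', true).
  by exists (q0, false); split => //; apply: mode_lts_quiet.
move=> [q1 [step run]] outq.
case: x step => [a|o|] step.
- case=> b1 sched; apply: (outs_after_cons (p1 := ((q1, b1) : mode_lts))).
    by rewrite /=; case: b0 => //; apply: may_in_must.
  exact: IH run outq sched.
- case=> b0_out [b1 sched]; apply: (outs_after_cons (p1 := ((q1, b1) : mode_lts))).
    by rewrite /= b0_out.
  exact: IH run outq sched.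
- case: step => qq ?; subst q1; case=> /negbTE b0_off sched.
  apply: (outs_after_cons (p1 := ((q0, false) : mode_lts))).
    by rewrite /= b0_off; split => //; apply: mode_lts_quiet.
  exact: IH run outq sched.
Qed.

End ModeLTS.

Theorem theorem1 (I O : Type) (Ms Mi : MIA I O) (s : Ms) (i : Mi) :
  input_enabled Mi ->
  mioco i s ->
  forall (L : IOLTS I O) (i' : L), refines_var i' i ->
  exists (L' : IOLTS I O) (s' : L'), refines_var s' s /\ ioco i' s'.
Proof.
move=> _ [dia_outs _] L i' [R [Ri simR]].
have [b0 mode0] := exists_mode (quiet (@trans _ _ L) i').
exists (mode_lts Ms), (s, b0); split; first exact: refines_var_mode.
move=> sigma [y run_s] l out_i'.
have [p run_i' out_p] := outs_witness out_i'.
have [q run_i Rpq] := var_simulation_after simR Ri run_i'.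
have out_i : outs (tDia Mi) (qDia Mi) (after (tDia Mi) (qDia Mi) i sigma) l.
  by apply: outs_mono (var_simulation_outs simR Rpq out_p) => _ ->.
have trace_s : straces (tDia Ms) (qDia Ms) s sigma.
  have [q' run_q' _] :=
    var_simulation_after (@mode_lts_var_simulation _ _ Ms) (erefl : (s, b0).1 = s) run_s.
  by exists q'.
have [qs run_qs out_qs] := outs_witness (dia_outs sigma trace_s l out_i).
exact: mode_lts_outs run_qs out_qs (mode_trace_of_lts mode0 run_i' out_p).
Qed.
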